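(* Assume that $(X_1,Y_1),\dots,(X_{n+1},Y_{n+1})$ are exchangeable, that the predictor $\hat f_D$ is invariant to permutations of the data in $D$, and that the non-conformity scores $S_{D^{Y_{n+1}}}(X_1,Y_1),\dots,S_{D^{Y_{n+1}}}(X_{n+1},Y_{n+1})$ are almost surely distinct. Assume further that there exists a constant $c>0$ such that the conditional density $p(\cdot\mid D,X_{n+1})$ of $Y_{n+1}$ on $\mathcal Y$ is bounded above by $c$. Then for every $\alpha\in(0,1)$, $$\mathbb P\big[Y_{n+1}\in\tilde C_\alpha(X_{n+1})\big]\le1-\alpha+\frac1{n+1}+c\,\mathbb E_{D,X_{n+1}}\big[\mathrm{THK}_\alpha(X_{n+1})\big].$$
   Context: Let $\mathcal X\subset\mathbb R^d$, $\mathcal Y\subset\mathbb R$, $D=\{(X_1,Y_1),\dots,(X_n,Y_n)\}$, and a further pair $(X_{n+1},Y_{n+1})$. For $y\in\mathcal Y$, $D^y=D\cup\{(X_{n+1},y)\}$, $\hat f_{D^y}$ a predictor trained on $D^y$, $s:\mathcal Y\times\mathcal Y\to\mathbb R_+$ a non-conformity function, $S_{D^y}(X_i,Y_i)=s(Y_i,\hat f_{D^y}(X_i))$ ($i\le n$), $S_{D^y}(X_{n+1},y)=s(y,\hat f_{D^y}(X_{n+1}))$, $\hat\pi_D(X_{n+1},y)=\frac{1+\sum_{i=1}^n\mathbb 1\{S_{D^y}(X_i,Y_i)\ge S_{D^y}(X_{n+1},y)\}}{n+1}$, $\hat C_\alpha(X_{n+1})=\{y:\hat\pi_D(X_{n+1},y)>\alpha\}$.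 For every $y$, let $\tilde S_{D^y}(X_i,Y_i)$, $\tilde S_{D^y}(X_{n+1},y)$ be approximate scores and $0\le\tau_i(y)<\infty$ with $|S_{D^y}(X_i,Y_i)-\tilde S_{D^y}(X_i,Y_i)|\le\tau_i(y)$ ($i\le n$) and $|S_{D^y}(X_{n+1},y)-\tilde S_{D^y}(X_{n+1},y)|\le\tau_{n+1}(y)$; $\tilde\pi_D(X_{n+1},y)=\frac{1+\sum_{i=1}^n\mathbb 1\{\tilde S_{D^y}(X_i,Y_i)+\tau_i(y)\ge\tilde S_{D^y}(X_{n+1},y)-\tau_{n+1}(y)\}}{n+1}$, $\tilde C_\alpha(X_{n+1})=\{y:\tilde\pi_D(X_{n+1},y)>\alpha\}$, and $\mathrm{THK}_\alpha(X_{n+1})=\mathcal L(\tilde C_\alpha(X_{n+1})\,\Delta\,\hat C_\alpha(X_{n+1}))$ ($\mathcal L$ Lebesgue measure, $\Delta$ symmetric difference). *)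

From HB Require Import structures.
From mathcomp Require Import all_boot all_order all_algebra all_classical all_reals all_analysis.
From mathcomp Require Import perm.

Set Implicit Arguments.
Unset Strict Implicit.
Unset Printing Implicit Defensive.

Import Order.TTheory GRing.Theory Num.Theory.
Local Open Scope classical_set_scope.
Local Open Scope ring_scope.

Notation datum R dd := (dd.-tuple R * R)%type.

(* Points are indexed by 'I_n.+1; index i : 'I_n.+1 with i < n is the paper's
   (X_{i+1}, Y_{i+1}); the last index ord_max is the test point (X_{n+1}, Y_{n+1}). *)

Definition augment (R : realType) (T : Type) (n dd : nat)
  (Z : 'I_n.+1 -> T -> datum R dd) (w : T) (y : R) : n.+1.-tuple (datum R dd) :=
  [tuple (if i == ord_max then ((Z ord_max w).1, y) else Z i w) | i < n.+1].

Definition full_data (R : realType) (T : Type) (n dd : nat)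
  (Z : 'I_n.+1 -> T -> datum R dd) (w : T) : n.+1.-tuple (datum R dd) :=
  [tuple Z i w | i < n.+1].

Definition cond_var (R : realType) (T : Type) (n dd : nat)
  (Z : 'I_n.+1 -> T -> datum R dd) (w : T) : n.-tuple (datum R dd) * dd.-tuple R :=
  ([tuple Z (widen_ord (leqnSn n) i) w | i < n], (Z ord_max w).1).

Definition score (R : realType) (n dd : nat)
  (fit : n.+1.-tuple (datum R dd) -> dd.-tuple R -> R) (s : R -> R -> R)
  (z : n.+1.-tuple (datum R dd)) (i : 'I_n.+1) : R :=
  s (tnth z i).2 (fit z (tnth z i).1).

Definition pval (R : realType) (n : nat) (S : 'I_n.+1 -> R) : R :=
  (1 + #|[set i : 'I_n.+1 | (i != ord_max) && (S ord_max <= S i)]|)%:R / (n.+1)%:R.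

Definition pval_tilde (R : realType) (n : nat) (St tau : 'I_n.+1 -> R) : R :=
  (1 + #|[set i : 'I_n.+1 | (i != ord_max) &&
            (St ord_max - tau ord_max <= St i + tau i)]|)%:R / (n.+1)%:R.

Definition C_hat (R : realType) (T : Type) (n dd : nat) (Yset : set R)
  (Z : 'I_n.+1 -> T -> datum R dd)
  (fit : n.+1.-tuple (datum R dd) -> dd.-tuple R -> R) (s : R -> R -> R)
  (alpha : R) (w : T) : set R :=
  [set y | Yset y /\ alpha < pval (score fit s (augment Z w y))].

Definition C_tilde (R : realType) (T : Type) (n dd : nat) (Yset : set R)
  (Z : 'I_n.+1 -> T -> datum R dd)
  (Stil tau : n.+1.-tuple (datum R dd) -> 'I_n.+1 -> R)
  (alpha : R) (w : T) : set R :=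
  [set y | Yset y /\ alpha < pval_tilde (Stil (augment Z w y)) (tau (augment Z w y))].

Definition symdiff (U : Type) (A B : set U) : set U := (A `\` B) `|` (B `\` A).

Definition THK (R : realType) (T : Type) (n dd : nat) (Yset : set R)
  (Z : 'I_n.+1 -> T -> datum R dd)
  (fit : n.+1.-tuple (datum R dd) -> dd.-tuple R -> R) (s : R -> R -> R)
  (Stil tau : n.+1.-tuple (datum R dd) -> 'I_n.+1 -> R)
  (alpha : R) (w : T) : \bar R :=
  (@lebesgue_measure R) (symdiff (C_tilde Yset Z Stil tau alpha w)
                                 (C_hat Yset Z fit s alpha w)).

Definition exchangeable (R : realType) (d : measure_display) (T : measurableType d)
  (P : probability T R) (n dd : nat) (Z : 'I_n.+1 -> T -> datum R dd) : Prop :=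
  forall (sg : 'S_n.+1) (A : set (n.+1.-tuple (datum R dd))), measurable A ->
    P ((fun w => [tuple Z (sg i) w | i < n.+1]) @^-1` A) =
    P ((fun w => [tuple Z i w | i < n.+1]) @^-1` A).

(* The conditional law of Y given W has a (jointly measurable) density p with
   respect to Lebesgue measure on Yset, bounded above by c on Yset:
   P(W in B, Y in A) = E[ 1_{W in B} \int_{A cap Yset} p(W, y) dy ]. *)
Definition cond_density_bounded (R : realType) (d : measure_display)
  (T : measurableType d) (P : probability T R) (dW : measure_display)
  (Wt : measurableType dW) (W : T -> Wt) (Y : T -> R) (Yset : set R) (c : R) : Prop :=
  exists p : Wt -> R -> R,
    [/\ measurable_fun [set: (Wt * measurableTypeR R)%type] (fun q => p q.1 q.2),
        (forall w y, 0 <= p w y),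
        (forall w y, Yset y -> p w y <= c) &
        (forall (B : set Wt) (A : set (measurableTypeR R)), measurable B -> measurable A ->
          P (W @^-1` B `&` Y @^-1` A) =
          (\int[P]_(x in W @^-1` B)
             (\int[@lebesgue_measure R]_(y in A `&` Yset) (p (W x) y)%:E))%E)].

From HB Require Import structures.
From mathcomp Require Import all_boot all_order all_algebra all_classical all_reals all_analysis.
From mathcomp Require Import perm measurable_realfun lra.

Import Order.TTheory GRing.Theory Num.Theory.
Local Open Scope classical_set_scope.
Local Open Scope ring_scope.

(* Write W = (D, X_{n+1}) and Y = Y_{n+1}.  If Y lies in the approximate set, it
   lies either in the exact set or in the symmetric difference of the two sets.
   Exchangeability and the symmetry of the fit make the p-value of the test point
   distributed like the p-value of any other point, while with distinct scores at
   most (n+1)(1-alpha)+1 of the n+1 p-values exceed alpha; hence Y is in the exact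
   set with probability at most 1-alpha+1/(n+1).  The symmetric difference is the
   W-section of a measurable set G of pairs (W, y).  The conditional-density
   identity, stated for rectangles, extends to G by uniqueness of measures, which
   bounds P((W, Y) in G) by c E[Leb(G_W)] = c E[THK]. *)

Lemma in_set_bool (T : Type) (b : pred T) (x : T) : (x \in [set y | b y]) = b x.
Proof. by apply/idP/idP => [/set_mem|/mem_set]. Qed.

Lemma card_set_sum (T : finType) (b : pred T) : #|[set x | b x]| = (\sum_x b x)%N.
Proof.
rewrite -sum1_card big_mkcond; apply: eq_bigr => x _.
by rewrite in_set_bool; case: (b x).
Qed.

(* [pval S] is [pval_at S ord_max] by conversion. *)
Definition pval_at {R : numFieldType} {N : nat} (S : 'I_N -> R) (j : 'I_N) : R :=
  (1 + #|[set i | (i != j) && (S j <= S i)]|)%:R / N%:R.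

Lemma pval_at_comp_perm (R : numFieldType) (N : nat) (S : 'I_N -> R) (sg : {perm 'I_N}) j :
  pval_at (S \o sg) j = pval_at S (sg j).
Proof.
rewrite /pval_at; congr ((1 + _)%:R / _).
rewrite !card_set_sum [RHS](reindex_inj (@perm_inj _ sg)); apply: eq_bigr => i _.
by rewrite (inj_eq (@perm_inj _ sg)).
Qed.

Lemma card_pval_at_gt (R : realFieldType) (N : nat) (S : 'I_N -> R) (alpha : R) :
  injective S -> alpha < 1 ->
  #|[set j | alpha < pval_at S j]|%:R <= N%:R * (1 - alpha) + 1.
Proof.
move=> injS alpha_lt1; set J := [set j | _] : set 'I_N.
have [j0 j0J | J0] := pickP (mem J); last first.
  by rewrite eq_card0 // addr_ge0 // mulr_ge0 // subr_ge0 ltW.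
have [jm jmJ jm_max] := @arg_maxP _ _ _ j0 (mem J) S j0J.
(* The member of [J] with the largest score is outranked only by indices outside [J]. *)
set above := [set i | (i != jm) && (S jm <= S i)].
have above_sub : {subset above <= [predC J]}.
  move=> i; rewrite in_set_bool inE => /andP[i_neq le_jm_i]; apply: contra i_neq => iJ.
  by apply/eqP/injS/eqP; rewrite eq_le le_jm_i andbT; exact: jm_max.
have card_above : #|above|%:R <= N%:R - #|J|%:R :> R.
  have cardJC : #|J|%:R + #|[predC J]|%:R = N%:R :> R.
    by rewrite -natrD cardC card_ord.
  by rewrite -cardJC addrAC subrr add0r ler_nat; apply/subset_leq_card/fintype.subsetP.
have N_gt0 : (0 : R) < N%:R by rewrite ltr0n (leq_ltn_trans (leq0n jm) (ltn_ord jm)).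
have alpha_lt : alpha * N%:R < (1 + #|above|)%:R.
  by rewrite -ltr_pdivlMr //; exact: set_mem jmJ.
rewrite natrD in alpha_lt.
lra.
Qed.

Section measurable_pvalues.
Context {d} {T : measurableType d} {R : realType}.

Lemma measurable_superlevel_set (a : R) (f : T -> R) :
  measurable_fun setT f -> measurable [set x | a < f x].
Proof.
move=> mf; have := measurable_fun_ltr (measurable_cst a) mf measurableT (I : measurable [set true]).
by rewrite setTI.
Qed.

Lemma measurable_conformal_pvalue (N : nat) (P : pred 'I_N) (a b : 'I_N -> T -> R) :
  (forall i, measurable_fun setT (a i)) -> (forall i, measurable_fun setT (b i)) ->
  measurable_fun setT
    (fun x => (1 + #|[set i | P i && (a i x <= b i x)]|)%:R / N%:R : R).
Proof.
move=> ma mb; apply: measurable_funM => //.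
under eq_fun do rewrite card_set_sum natrD natr_sum.
apply: measurable_funD => //; apply: measurable_sum => i.
rewrite (_ : (fun x => _) = fun x => if P i && (a i x <= b i x) then 1 else 0).
  apply: measurable_fun_ifT => //; apply: measurable_and => //.
  exact: measurable_fun_ler.
by apply/funext => x; case: ifP.
Qed.

Lemma measurable_pval_at (N : nat) (S : T -> 'I_N -> R) (j : 'I_N) :
  (forall i, measurable_fun setT (S ^~ i)) -> measurable_fun setT (fun x => pval_at (S x) j).
Proof. by move=> mS; exact: (measurable_conformal_pvalue _ _ (fun=> S ^~ j)). Qed.

Lemma measurable_pval_tilde (n : nat) (St tau : T -> 'I_n.+1 -> R) :
  (forall i, measurable_fun setT (St ^~ i)) -> (forall i, measurable_fun setT (tau ^~ i)) ->
  measurable_fun setT (fun x => pval_tilde (St x) (tau x)).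
Proof.
move=> mSt mtau.
apply: (measurable_conformal_pvalue _ _ (fun _ x => St x ord_max - tau x ord_max)).
  by move=> _; exact: measurable_funB.
by move=> i; exact: measurable_funD.
Qed.

End measurable_pvalues.

Lemma measurable_mktuple d d' (T : measurableType d) (U : measurableType d') (N : nat)
    (f : 'I_N -> T -> U) :
  (forall i, measurable_fun setT (f i)) ->
  measurable_fun setT (fun x => [tuple f i x | i < N]).
Proof.
move=> mf; apply/measurable_fun_tnthP => i.
by rewrite (_ : _ \o _ = f i) //; apply/funext => x /=; rewrite tnth_mktuple.
Qed.

Section augmented_data.
Context {R : realType} {n dd : nat}.

Definition augment_pair (q : (n.-tuple (datum R dd) * dd.-tuple R) * R) :
    n.+1.-tuple (datum R dd) :=
  [tuple match unlift ord_max i with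
         | Some j => tnth q.1.1 j
         | None => (q.1.2, q.2) end | i < n.+1].

Lemma augmentE (T : Type) (Z : 'I_n.+1 -> T -> datum R dd) (w : T) (y : R) :
  augment Z w y = augment_pair (cond_var Z w, y).
Proof.
apply: eq_from_tnth => i; rewrite !tnth_mktuple.
case: (unliftP ord_max i) => [j ->|->]; last by rewrite eqxx.
rewrite eq_sym (negbTE (neq_lift _ _)) /= tnth_mktuple; congr (Z _ w).
by apply: val_inj; rewrite /= /bump leqNgt ltn_ord.
Qed.

Lemma full_data_augment (T : Type) (Z : 'I_n.+1 -> T -> datum R dd) (w : T) :
  full_data Z w = augment Z w (Z ord_max w).2.
Proof.
apply: eq_from_tnth => i; rewrite !tnth_mktuple.
by case: eqP => [->|//]; case: (Z ord_max w).
Qed.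

Lemma measurable_augment_pair :
  measurable_fun [set: (n.-tuple (datum R dd) * dd.-tuple R) * measurableTypeR R]
    augment_pair.
Proof.
apply/measurable_fun_tnthP => i.
rewrite (_ : _ \o _ = fun q => match unlift ord_max i with
    | Some j => tnth q.1.1 j | None => (q.1.2, q.2) end); last first.
  by apply/funext => q /=; rewrite tnth_mktuple.
case: (unlift ord_max i) => [j|]; last first.
  by apply: measurable_fun_pair => //; exact: measurableT_comp measurable_snd measurable_fst.
exact: measurableT_comp (measurable_tnth j) (measurableT_comp measurable_fst measurable_fst).
Qed.

Lemma measurable_cond_var {d} {T : measurableType d} (Z : 'I_n.+1 -> T -> datum R dd) :
  (forall i, measurable_fun setT (Z i)) -> measurable_fun setT (cond_var Z).
Proof.
move=> mZ; apply: measurable_fun_pair; first exact: measurable_mktuple.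
exact: measurableT_comp measurable_fst (mZ _).
Qed.

Lemma measurable_score (fit : n.+1.-tuple (datum R dd) -> dd.-tuple R -> R)
    (s : R -> R -> R) (i : 'I_n.+1) :
  measurable_fun [set: (n.+1.-tuple (datum R dd) * dd.-tuple R)%type]
    (fun q => fit q.1 q.2) ->
  measurable_fun [set: (R * R)%type] (fun q => s q.1 q.2) ->
  measurable_fun setT (fun z => score fit s z i).
Proof.
move=> mfit ms.
have mdatum : measurable_fun setT (fun z : n.+1.-tuple (datum R dd) => tnth z i).
  exact: measurable_tnth.
apply: (measurableT_comp (f := fun q : R * R => s q.1 q.2)
  (g := fun z => ((tnth z i).2, fit z (tnth z i).1))) => //.
apply: measurable_fun_pair; first exact: measurableT_comp measurable_snd mdatum.
apply: (measurableT_comp (f := fun q => fit q.1 q.2) (g := fun z => (z, (tnth z i).1))) => //.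
exact: measurable_fun_pair (measurableT_comp measurable_fst mdatum).
Qed.

End augmented_data.

Lemma equiprobable_events_le d (T : measurableType d) (R : realType)
    (P : probability T R) (N : nat) (E : 'I_N -> set T) (j0 : 'I_N) (K : R) :
  (forall j, measurable (E j)) -> (forall j, P (E j) = P (E j0)) -> 0 <= K ->
  {ae P, forall x, #|[set j | x \in E j]|%:R <= K} ->
  (P (E j0) <= (K / N%:R)%:E)%E.
Proof.
move=> mE PE K0 count_le.
have count_sum x : (#|[set j | x \in E j]|%:R : R)%:E = (\sum_(j < N) (\1_(E j) x)%:E)%E.
  by rewrite sumEFin card_set_sum natr_sum.
have mI j : measurable_fun setT (fun x => (\1_(E j) x)%:E : \bar R).
  by apply/measurable_EFinP; exact: measurable_indic.
have sum_le : (\sum_(j < N) P (E j) <= K%:E)%E.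
  rewrite -[leRHS]mule1 -(probability_setT P) -integral_cst //.
  under eq_bigr do rewrite -[E _]setIT -integral_indic //.
  rewrite -ge0_integral_sum //; apply: ae_ge0_le_integral => //.
  - by move=> x _; apply: sume_ge0 => j _; rewrite lee_fin.
  - exact: emeasurable_sum.
  - by apply: filterS count_le => x count_x _; rewrite -count_sum lee_fin.
have N_gt0 : (0 : R) < N%:R by rewrite ltr0n (leq_ltn_trans (leq0n j0) (ltn_ord j0)).
rewrite -(fineK (fin_num_measure P _ (mE j0))) in PE *.
move: sum_le; under eq_bigr do rewrite PE.
by rewrite sumEFin sumr_const card_ord !lee_fin ler_pdivlMr // mulr_natr.
Qed.

Lemma score_perm (R : realType) (n dd : nat)
    (fit : n.+1.-tuple (datum R dd) -> dd.-tuple R -> R) (s : R -> R -> R)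
    (z : n.+1.-tuple (datum R dd)) (sg : 'S_n.+1) :
  (forall z z' : n.+1.-tuple (datum R dd), perm_eq z z' -> fit z = fit z') ->
  score fit s [tuple tnth z (sg i) | i < n.+1] = score fit s z \o sg.
Proof.
move=> fit_sym; apply/funext => i; rewrite /score /= tnth_mktuple.
suff -> : fit [tuple tnth z (sg i) | i < n.+1] = fit z by [].
by apply/fit_sym/tuple_permP; exists sg.
Qed.

Section conformal_validity.
Context {d} {T : measurableType d} {R : realType} (P : probability T R) {n dd : nat}.
Variables (Z : 'I_n.+1 -> T -> datum R dd)
  (fit : n.+1.-tuple (datum R dd) -> dd.-tuple R -> R) (s : R -> R -> R).
Hypothesis mZ : forall i, measurable_fun setT (Z i).
Hypothesis mfit : measurable_fun [set: (n.+1.-tuple (datum R dd) * dd.-tuple R)%type]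
  (fun q => fit q.1 q.2).
Hypothesis ms : measurable_fun [set: (R * R)%type] (fun q => s q.1 q.2).
Hypothesis exchZ : exchangeable P Z.
Hypothesis fit_sym : forall z z' : n.+1.-tuple (datum R dd), perm_eq z z' -> fit z = fit z'.

Let conformal_set (alpha : R) (j : 'I_n.+1) : set (n.+1.-tuple (datum R dd)) :=
  [set z | alpha < pval_at (score fit s z) j].

Let measurable_conformal_set alpha j : measurable (conformal_set alpha j).
Proof.
apply: measurable_superlevel_set.
by apply: measurable_pval_at => i; exact: measurable_score.
Qed.

Let measurable_full_data : measurable_fun setT (full_data Z).
Proof. exact: measurable_mktuple. Qed.

(* Exchanging the test point with the j-th point leaves the joint law unchanged. *)
Let exchangeable_conformal_event alpha j :
  P (full_data Z @^-1` conformal_set alpha j) =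
  P (full_data Z @^-1` conformal_set alpha ord_max).
Proof.
pose sg := tperm j ord_max.
have permuted w :
    [tuple Z (sg i) w | i < n.+1] = [tuple tnth (full_data Z w) (sg i) | i < n.+1].
  by apply: eq_from_tnth => i; rewrite !tnth_mktuple.
rewrite -[RHS](exchZ sg) //; congr (P _); apply/seteqP; split => w;
  by rewrite /= /conformal_set /= permuted score_perm // pval_at_comp_perm /sg tpermR.
Qed.

Lemma conformal_pvalue_valid (alpha : R) : 0 < alpha < 1 ->
  {ae P, forall w, injective (score fit s (full_data Z w))} ->
  (P [set w | (alpha < pval (score fit s (full_data Z w)))%R] <=
   (1 - alpha + n.+1%:R^-1)%:E)%E.
Proof.
move=> /andP[alpha_gt0 alpha_lt1] score_inj.
have -> : 1 - alpha + n.+1%:R^-1 = (n.+1%:R * (1 - alpha) + 1) / n.+1%:R.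
  by rewrite mulrDl mulrAC divff ?mul1r // pnatr_eq0.
apply: (@equiprobable_events_le _ _ _ P _
  (fun j => full_data Z @^-1` conformal_set alpha j) ord_max).
- move=> j; rewrite -[X in measurable X]setTI; exact: measurable_full_data.
- exact: exchangeable_conformal_event.
- by rewrite addr_ge0 // mulr_ge0 // subr_ge0 ltW.
apply: filterS score_inj => w inj_w.
rewrite (eq_card (_ : _ =i [set j | alpha < pval_at (score fit s (full_data Z w)) j])).
  exact: card_pval_at_gt.
by move=> j; rewrite !in_set_bool.
Qed.

End conformal_validity.

Section density_mixture.
Local Open Scope ereal_scope.
Context {d} {T : measurableType d} {R : realType} (P : {measure set T -> \bar R}).
Context {dW} {Wt : measurableType dW} (W : T -> Wt) (h : Wt -> R -> \bar R).
Hypothesis mW : measurable_fun setT W.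
Hypothesis mh : measurable_fun [set: Wt * measurableTypeR R] (fun q => h q.1 q.2).
Hypothesis h0 : forall w y, 0 <= h w y.

Definition section_integral (G : set (Wt * measurableTypeR R)) (w : Wt) : \bar R :=
  \int[lebesgue_measure]_(y in xsection G w) h w y.

Lemma measurable_section_integral G :
  measurable G -> measurable_fun setT (section_integral G).
Proof.
move=> mG.
rewrite (_ : section_integral G =
  fubini_F lebesgue_measure (fun q => (\1_G q)%:E * h q.1 q.2)); last first.
  apply/funext => w; rewrite /section_integral /fubini_F [LHS]integral_mkcond.
  apply: eq_integral => y _; rewrite patchE indicE mem_xsection.
  by case: (_ \in G); rewrite ?mul1e ?mul0e.
apply: measurable_fun_fubini_tonelli_F.
  by apply: emeasurable_funM => //; apply/measurable_EFinP; exact: measurable_indic.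
by move=> q; rewrite mule_ge0 // lee_fin indicE.
Qed.

(* The candidate joint law of (W, Y). *)
Definition mixture (G : set (Wt * measurableTypeR R)) : \bar R :=
  \int[P]_x section_integral G (W x).

Let mixture0 : mixture set0 = 0.
Proof.
by apply: integral0_eq => x _; rewrite /section_integral xsection0 integral_set0.
Qed.

Let mixture_ge0 G : 0 <= mixture G.
Proof. by apply: integral_ge0 => x _; exact: integral_ge0. Qed.

Let mixture_sigma_additive : semi_sigma_additive mixture.
Proof.
move=> F mF tF mUF.
rewrite [X in _ --> X](_ : _ = \sum_(k <oo) mixture (F k)).
  by apply: is_cvg_nneseries => k _ _; exact: mixture_ge0.
rewrite /mixture -integral_nneseries//; last first.
- by move=> k x _; exact: integral_ge0.
- by move=> k; apply: measurableT_comp mW; exact: measurable_section_integral.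
apply: eq_integral => x _; rewrite /section_integral xsection_bigcup.
apply: ge0_integral_bigcup => //.
- by move=> k; exact: measurable_xsection.
- by apply: measurable_funTS; exact: measurableT_comp mh (measurable_fun_pair _ _).
- exact: trivIset_xsection.
Qed.

HB.instance Definition _ := isMeasure.Build _ _ _ mixture
  mixture0 mixture_ge0 mixture_sigma_additive.

End density_mixture.

Section conditional_density.
Local Open Scope ereal_scope.
Context {d} {T : measurableType d} {R : realType} (P : probability T R).
Context {dW} {Wt : measurableType dW} (W : T -> Wt) (Y : T -> R) (Yset : set R).
Hypotheses (mW : measurable_fun setT W) (mY : measurable_fun setT Y).
Hypothesis mYset : measurable Yset.
Variable p : Wt -> R -> R.
Hypothesis mp : measurable_fun [set: Wt * measurableTypeR R] (fun q => p q.1 q.2).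
Hypothesis p0 : forall w y, (0 <= p w y)%R.
Hypothesis P_rect : forall (B : set Wt) (A : set (measurableTypeR R)),
  measurable B -> measurable A ->
  P (W @^-1` B `&` Y @^-1` A) =
  \int[P]_(x in W @^-1` B) \int[lebesgue_measure]_(y in A `&` Yset) (p (W x) y)%:E.

Let h w y := (\1_Yset y * p w y)%:E.

Let mh : measurable_fun [set: Wt * measurableTypeR R] (fun q => h q.1 q.2).
Proof.
apply/measurable_EFinP; apply: measurable_funM => //.
by apply: (measurableT_comp (f := \1_Yset : measurableTypeR R -> R)) => //; exact: measurable_indic.
Qed.

Let h0 w y : 0 <= h w y. Proof. by rewrite lee_fin mulr_ge0 // indicE. Qed.

(* Both sides are measures in G that agree on the pi-system of rectangles. *)
Lemma cond_density_preimage G : measurable G ->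
  P ((fun x => (W x, Y x)) @^-1` G) = \int[P]_x section_integral h G (W x).
Proof.
move=> mG.
have mWY : measurable_fun setT (fun x => (W x, Y x) : Wt * measurableTypeR R).
  exact: measurable_fun_pair.
pose rects := [set A `*` B | A in @measurable _ Wt & B in @measurable _ (measurableTypeR R)].
apply: (measure_unique rects (fun _ => setT) _ _ _ _
  (pushforward P (fun x => (W x, Y x) : Wt * measurableTypeR R)) (mixture P W h)) => //.
- exact: measurable_prod_measurableType.
- move=> _ _ [A1 mA1 [B1 mB1 <-]] [A2 mA2 [B2 mB2 <-]].
  exists (A1 `&` A2); first exact: measurableI.
  by exists (B1 `&` B2); [exact: measurableI|rewrite setXI].
- by move=> _; exists setT => //; exists setT => //; rewrite setXTT.
- by rewrite bigcup_const.
- move=> _ [B mB [A mA <-]].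
  change (P (W @^-1` B `&` Y @^-1` A) = \int[P]_x section_integral h (B `*` A) (W x)).
  rewrite P_rect // integral_mkcond; apply: eq_integral => x _; rewrite patchE /section_integral.
  case: ifPn => xB; last by rewrite notin_xsectionX ?integral_set0 // inE; move: xB; rewrite inE.
  rewrite in_xsectionX; last by move: xB; rewrite !inE.
  rewrite [LHS]integral_mkcond [RHS]integral_mkcond; apply: eq_integral => y _.
  rewrite !patchE /h indicE in_setI.
  by case: (y \in A); case: (y \in Yset); rewrite ?mul1r ?mul0r.
- move=> _; change (P ((fun x => (W x, Y x)) @^-1` setT) < +oo).
  by rewrite preimage_setT probability_setT ltry.
Qed.

Lemma cond_density_preimage_le (c : R) G : (0 <= c)%R ->
  (forall w y, Yset y -> (p w y <= c)%R) -> measurable G ->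
  P ((fun x => (W x, Y x)) @^-1` G) <=
  c%:E * \int[P]_x lebesgue_measure (xsection G (W x)).
Proof.
move=> c0 pc mG.
have mleb : measurable_fun setT (fun x => lebesgue_measure (xsection G (W x))).
  apply: (measurableT_comp (f := fun w => lebesgue_measure (xsection G w)) (g := W)) => //.
  exact: measurable_fun_xsection.
rewrite cond_density_preimage // -ge0_integralZl //.
apply: ge0_le_integral => //.
- by move=> x _; exact: integral_ge0.
- apply: (measurableT_comp (f := section_integral h G) (g := W)) => //.
  exact: measurable_section_integral.
- exact: measurable_funeM.
move=> x _; rewrite /section_integral -integral_cst; last exact: measurable_xsection.
apply: ge0_le_integral => //.
- exact: measurable_xsection.
- by apply: measurable_funTS; exact: measurableT_comp mh (measurable_fun_pair _ _).
move=> y _; rewrite /h indicE lee_fin.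
have [/set_mem Yy|_] := boolP (y \in Yset); last by rewrite mul0r.
by rewrite mul1r; exact: pc.
Qed.

End conditional_density.

Lemma cond_density_bounded_preimage_le {d} {T : measurableType d} {R : realType}
    (P : probability T R) {dW} {Wt : measurableType dW} {W : T -> Wt} {Y : T -> R}
    {Yset : set R} {c : R} {G : set (Wt * measurableTypeR R)} :
  measurable_fun setT W -> measurable_fun setT Y -> measurable Yset -> (0 <= c)%R ->
  cond_density_bounded P W Y Yset c -> measurable G ->
  (P ((fun x => (W x, Y x)) @^-1` G) <=
   c%:E * \int[P]_x lebesgue_measure (xsection G (W x)))%E.
Proof.
move=> mW mY mYset c0 [p [mp p0 pc P_rect]] mG.
exact: (cond_density_preimage_le P W Y Yset mW mY mYset p mp p0 P_rect c G c0 pc mG).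
Qed.

Lemma measure_preimage_le_symdiff {d d'} {T : measurableType d} {U : measurableType d'}
    {R : realType} (mu : {measure set T -> \bar R}) {f : T -> U} {A B : set U} :
  measurable_fun setT f -> measurable A -> measurable B ->
  (mu (f @^-1` A) <= mu (f @^-1` B) + mu (f @^-1` symdiff A B))%E.
Proof.
move=> mf mA mB.
have mpre C : measurable C -> measurable (f @^-1` C).
  by move=> mC; rewrite -[X in measurable X]setTI; exact: mf.
have msymdiff : measurable (symdiff A B) by apply: measurableU; exact: measurableD.
apply: le_trans (measureU2 mu (mpre _ mB) (mpre _ msymdiff)).
apply: le_measure; rewrite ?inE.
- exact: mpre.
- by apply: measurableU; exact: mpre.
- by move=> x Ax; have [Bx|nBx] := pselect (B (f x)); [left|right; left].
Qed.

Lemma xsection_symdiff (T1 T2 : Type) (A B : set (T1 * T2)) (x : T1) :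
  xsection (symdiff A B) x = symdiff (xsection A x) (xsection B x).
Proof. by rewrite !xsectionE. Qed.

Section conformal_regions.
Context {R : realType} {n dd : nat} (Yset : set R) (alpha : R).

Definition conformal_region (pv : n.+1.-tuple (datum R dd) -> R) :
    set ((n.-tuple (datum R dd) * dd.-tuple R) * measurableTypeR R) :=
  [set q | Yset q.2 /\ alpha < pv (augment_pair q)].

Lemma conformal_set_xsection (T : Type) (Z : 'I_n.+1 -> T -> datum R dd) pv (w : T) :
  [set y | Yset y /\ alpha < pv (augment Z w y)] =
  xsection (conformal_region pv) (cond_var Z w).
Proof. by rewrite xsectionE; apply/seteqP; split => y; rewrite /= augmentE. Qed.

Lemma conformal_region_preimage (T : Type) (Z : 'I_n.+1 -> T -> datum R dd) pv :
  (forall w, Yset (Z ord_max w).2) ->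
  (fun w => (cond_var Z w, (Z ord_max w).2)) @^-1` conformal_region pv =
  [set w | alpha < pv (full_data Z w)].
Proof.
move=> ZY; apply/seteqP; split => w;
  rewrite /conformal_region /= -augmentE -full_data_augment; [by case|by split].
Qed.

Lemma conformal_event_preimage (T : Type) (Z : 'I_n.+1 -> T -> datum R dd) pv :
  [set w | Yset (Z ord_max w).2 /\ alpha < pv (augment Z w (Z ord_max w).2)] =
  (fun w => (cond_var Z w, (Z ord_max w).2)) @^-1` conformal_region pv.
Proof. by apply/seteqP; split => w; rewrite /= augmentE. Qed.

Lemma measurable_conformal_region pv :
  measurable Yset -> measurable_fun setT pv -> measurable (conformal_region pv).
Proof.
move=> mYset mpv; apply: measurableI.
  by rewrite -[X in measurable X]setTI; exact: measurable_snd.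
by apply: measurable_superlevel_set; exact: measurableT_comp mpv measurable_augment_pair.
Qed.

Lemma THK_xsection (T : Type) (Z : 'I_n.+1 -> T -> datum R dd)
    (fit : n.+1.-tuple (datum R dd) -> dd.-tuple R -> R) (s : R -> R -> R)
    (Stil tau : n.+1.-tuple (datum R dd) -> 'I_n.+1 -> R) (w : T) :
  THK Yset Z fit s Stil tau alpha w =
  lebesgue_measure (xsection
    (symdiff (conformal_region (fun z => pval_tilde (Stil z) (tau z)))
             (conformal_region (fun z => pval (score fit s z))))
    (cond_var Z w)).
Proof. by rewrite xsection_symdiff -!conformal_set_xsection. Qed.

End conformal_regions.

Theorem lemma26 (R : realType) (d : measure_display) (T : measurableType d)
  (P : probability T R) (n dd : nat) (Xset : set (dd.-tuple R)) (Yset : set R)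
  (Z : 'I_n.+1 -> T -> datum R dd)
  (fit : n.+1.-tuple (datum R dd) -> dd.-tuple R -> R) (s : R -> R -> R)
  (Stil tau : n.+1.-tuple (datum R dd) -> 'I_n.+1 -> R) (c alpha : R) :
  measurable Yset ->
  (forall i, measurable_fun [set: T] (Z i)) ->
  (forall i w, Xset (Z i w).1 /\ Yset (Z i w).2) ->
  measurable_fun [set: (n.+1.-tuple (datum R dd) * dd.-tuple R)%type]
    (fun q => fit q.1 q.2) ->
  measurable_fun [set: (R * R)%type] (fun q => s q.1 q.2) ->
  (forall a b, 0 <= s a b) ->
  (forall i, measurable_fun [set: n.+1.-tuple (datum R dd)] (fun z => Stil z i)) ->
  (forall i, measurable_fun [set: n.+1.-tuple (datum R dd)] (fun z => tau z i)) ->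
  (forall w y, Yset y -> forall i,
     0 <= tau (augment Z w y) i /\
     `|score fit s (augment Z w y) i - Stil (augment Z w y) i| <= tau (augment Z w y) i) ->
  exchangeable P Z ->
  (forall z z' : n.+1.-tuple (datum R dd), perm_eq z z' -> fit z = fit z') ->
  {ae P, forall w, injective (score fit s (full_data Z w))} ->
  0 < c ->
  cond_density_bounded P (cond_var Z) (fun w => (Z ord_max w).2) Yset c ->
  0 < alpha < 1 ->
  (P [set w | C_tilde Yset Z Stil tau alpha w (Z ord_max w).2] <=
   (1 - alpha + (n.+1)%:R^-1)%:E
     + c%:E * \int[P]_w THK Yset Z fit s Stil tau alpha w)%E.
Proof.
(* The error bounds [tau] need not be valid: THK absorbs any disagreement
   between the approximate and the exact conformal sets. *)
move=> mYset mZ ZXY mfit ms _ mStil mtau _ exchZ fit_sym score_inj c_gt0 cdens alpha01.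
pose Ht := conformal_region Yset alpha (fun z => pval_tilde (Stil z) (tau z)).
pose Hh := conformal_region Yset alpha (fun z => pval (score fit s z)).
pose WY w : _ * measurableTypeR R := (cond_var Z w, (Z ord_max w).2).
have mY : measurable_fun setT (fun w => (Z ord_max w).2).
  exact: measurableT_comp measurable_snd (mZ _).
have mWY : measurable_fun setT WY := measurable_fun_pair (measurable_cond_var Z mZ) mY.
have mHt : measurable Ht.
  by apply: measurable_conformal_region => //; exact: measurable_pval_tilde.
have mHh : measurable Hh.
  apply: measurable_conformal_region => //.
  by apply: measurable_pval_at => i; exact: measurable_score.
rewrite [X in P X](_ : _ = WY @^-1` Ht); last exact: conformal_event_preimage.
apply: le_trans (measure_preimage_le_symdiff P mWY mHt mHh) _; apply: leeD.
  rewrite conformal_region_preimage; last by move=> w; case: (ZXY ord_max w).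
  exact: conformal_pvalue_valid.
under eq_integral do rewrite THK_xsection.
apply: (cond_density_bounded_preimage_le P (measurable_cond_var Z mZ) mY mYset (ltW c_gt0) cdens).
by apply: measurableU; exact: measurableD.
Qed.
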